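(* Let $H=\bigcup_{j=1}^n(c_j,d_j)\subset\mathbb R$ with pairwise disjoint closed intervals $[c_j,d_j]$, let $\mathcal B$ be finite and $m\ge2$. Assume for each $\beta\in\mathcal B$: $b_\beta,\theta_\beta\in C^m(\bar H)$, $b_\beta>0$ on $\bar H$, $\theta_\beta(H)\subset H$; and there exist $\mu\ge1$ and $\kappa<1$ with $|\theta_\omega(x)-\theta_\omega(y)|\le\kappa|x-y|$ for all $\omega\in\mathcal B_\mu$, $x,y\in\bar H$. Let $C_1=\sup\{|Db_\beta(x)|/b_\beta(x):\beta\in\mathcal B,x\in H\}$, $C_2=\sup\{|D^2b_\beta(x)|/b_\beta(x):\beta\in\mathcal B,x\in H\}$, $M_0=\sup\{|D^2\theta_\beta(x)|:\beta\in\mathcal B,x\in\bar H\}$, $\epsilon_0=1$ and $\epsilon_\nu=\sup\{|\theta_\omega(x)-\theta_\omega(y)|/|x-y|:\omega\in\mathcal B_\nu,x,y\in H,x\neq y\}$ for $\nu\ge1$. Then for $s>0$, every $\nu\ge1$, every $\omega\in\mathcal B_\nu$ and $x\in\bar H$, $$\frac{D^2(b_\omega(x)^s)}{b_\omega(x)^s}\le s^2C_1^2\Big(\sum_{k=0}^\infty\epsilon_k\Big)^2+s\Big(\sum_{k=0}^\infty\epsilon_k^2\Big)\Big[C_2+C_1M_0\sum_{k=0}^\infty\epsilon_k\Big]$$ and $$\frac{D^2(b_\omega(x)^s)}{b_\omega(x)^s}\ge -s\Big(\sum_{k=0}^\infty\epsilon_k^2\Big)\Big[C_1^2+C_2+C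_1M_0\sum_{k=0}^\infty\epsilon_k\Big].$$
   Context: $D=d/dx$. $\mathcal B_\nu=\{(j_1,\ldots,j_\nu):j_k\in\mathcal B\}$; for $\omega=(j_1,\ldots,j_\nu)$, $\theta_\omega=\theta_{j_\nu}\circ\cdots\circ\theta_{j_1}$ and $b_\omega(x)=b_{j_\nu}(\theta_{(j_1,\ldots,j_{\nu-1})}(x))\cdots b_{j_2}(\theta_{j_1}(x))\,b_{j_1}(x)$. $C^m(\bar H)$ denotes real $C^m$ functions on $H$ whose derivatives of order $\le m$ extend continuously to $\bar H$. *)

From Stdlib Require Import Reals Lra List.
From Coquelicot Require Import Coquelicot.
Open Scope R_scope.

Definition Hset (n : nat) (c d : nat -> R) (x : R) : Prop :=
  exists j, (j < n)%nat /\ c j < x < d j.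

Definition Hbar (n : nat) (c d : nat -> R) (x : R) : Prop :=
  exists j, (j < n)%nat /\ c j <= x <= d j.

Definition cont_within (A : R -> Prop) (g : R -> R) (x : R) : Prop :=
  filterlim g (within A (locally x)) (locally (g x)).

Definition cont_ext (A Abar : R -> Prop) (h g : R -> R) : Prop :=
  (forall x, A x -> g x = h x) /\ (forall x, Abar x -> cont_within Abar g x).

Definition Cm_bar (m : nat) (A Abar : R -> Prop) (f : R -> R) : Prop :=
  (forall x, A x -> forall k, (k <= m)%nat -> ex_derive_n f k x) /\
  (forall x, Abar x -> cont_within Abar f x) /\
  (forall k, (k <= m)%nat -> exists g, cont_ext A Abar (Derive_n f k) g).

(* words omega = (j_1,...,j_nu) in B_nu, with B = {0,...,p-1} *)
Definition word (p nu : nat) (w : list nat) : Prop :=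
  length w = nu /\ List.Forall (fun j => (j < p)%nat) w.

(* theta_omega = theta_{j_nu} o ... o theta_{j_1} *)
Fixpoint theta_w (theta : nat -> R -> R) (w : list nat) (x : R) : R :=
  match w with
  | nil => x
  | j :: w' => theta_w theta w' (theta j x)
  end.

(* b_omega(x) = b_{j_nu}(theta_{(j_1..j_{nu-1})} x) ... b_{j_2}(theta_{j_1} x) b_{j_1}(x) *)
Fixpoint b_w (b theta : nat -> R -> R) (w : list nat) (x : R) : R :=
  match w with
  | nil => 1
  | j :: w' => b_w b theta w' (theta j x) * b j x
  end.

Definition supR (P : R -> Prop) : R := real (Lub_Rbar P).

Definition Cb1 (p n : nat) (c d : nat -> R) (b : nat -> R -> R) : R :=
  supR (fun r => exists j x, (j < p)%nat /\ Hset n c d x /\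
          r = Rabs (Derive (b j) x) / b j x).

Definition Cb2 (p n : nat) (c d : nat -> R) (b : nat -> R -> R) : R :=
  supR (fun r => exists j x, (j < p)%nat /\ Hset n c d x /\
          r = Rabs (Derive_n (b j) 2 x) / b j x).

(* sup over beta and x in Hbar of |D^2 theta_beta(x)|, D^2 theta_beta on Hbar being
   the continuous extension of D^2 theta_beta from H *)
Definition Mth0 (p n : nat) (c d : nat -> R) (theta : nat -> R -> R) : R :=
  supR (fun r => exists j x g, (j < p)%nat /\ Hbar n c d x /\
          cont_ext (Hset n c d) (Hbar n c d) (Derive_n (theta j) 2) g /\
          r = Rabs (g x)).

Definition eps (p n : nat) (c d : nat -> R) (theta : nat -> R -> R) (nu : nat) : R :=
  match nu with
  | O => 1
  | S _ => supR (fun r => exists w x y, word p nu w /\ Hset n c d x /\ Hset n c d y /\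
             x <> y /\ r = Rabs (theta_w theta w x - theta_w theta w y) / Rabs (x - y))
  end.

From Stdlib Require Import Reals Lra Lia List Classical.
From Coquelicot Require Import Coquelicot.
Open Scope R_scope.

(* Write b_omega^s = exp (s log b_omega), so that
   D^2 (b_omega^s) / b_omega^s = s D^2 log b_omega + s^2 (D log b_omega)^2, and
   log b_omega = sum_k log b_(j_k) o theta_(j_1 .. j_(k-1)).  By the chain rule the k-th summand has
   first derivative at most C1 eps_k and second derivative between -(C1^2 + C2) eps_k^2 - C1 |D^2 theta|
   and C2 eps_k^2 + C1 |D^2 theta| (theta along the prefix of length k), where
   |D theta_omega| <= eps_|omega| because eps_nu is a Lipschitz constant, and
   |D^2 theta_omega| <= M0 sum_i eps_i^2 eps_(|omega|-1-i).  Summing, the convolution is dominated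
   by (sum eps_k^2)(sum eps_k).  The contraction hypothesis gives eps_(k+mu) <= kappa eps_k, so
   both series converge and dominate every partial sum.  The resulting bound holds on the open set H
   and passes to its closure by continuity of the extension of D^2 (b_omega^s). *)

Lemma supR_ub (E : R -> Prop) (M r : R) :
  (forall u, E u -> u <= M) -> E r -> r <= supR E.
Proof.
  intros HM Er. unfold supR. destruct (Lub_Rbar_correct E) as [Hub Hlub].
  assert (H1 := Hub r Er).
  assert (H2 : Rbar_le (Lub_Rbar E) M) by (apply Hlub; intros u Eu; apply HM, Eu).
  destruct (Lub_Rbar E); simpl in *; easy.
Qed.

Lemma supR_le (E : R -> Prop) (K : R) :
  (forall u, E u -> u <= K) -> 0 <= K -> supR E <= K.
Proof.
  intros HK HK0. unfold supR. destruct (Lub_Rbar_correct E) as [_ Hlub].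
  assert (H2 : Rbar_le (Lub_Rbar E) K) by (apply Hlub; intros u Eu; apply HK, Eu).
  destruct (Lub_Rbar E); simpl in *; easy.
Qed.

Lemma supR_ge0 (E : R -> Prop) : (forall u, E u -> 0 <= u) -> 0 <= supR E.
Proof.
  intros H0. unfold supR. destruct (Lub_Rbar_correct E) as [Hub Hlub].
  destruct (Lub_Rbar E) as [l| |] eqn:HL; simpl; try lra.
  destruct (classic (exists u, E u)) as [[u Eu]|Hne].
  - specialize (Hub u Eu). specialize (H0 u Eu). simpl in Hub. lra.
  - assert (Hbot : Rbar_le (Finite l) m_infty)
      by (apply Hlub; intros u Eu; exfalso; apply Hne; exists u; exact Eu).
    contradiction.
Qed.

Lemma uniform_upper_bound (N : nat) (Q : nat -> R -> Prop) :
  (forall i M M', M <= M' -> Q i M -> Q i M') ->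
  (forall i, (i < N)%nat -> exists M, Q i M) ->
  exists M, forall i, (i < N)%nat -> Q i M.
Proof.
  intros Hmon. induction N as [|N IH]; intros Hex.
  - exists 0. intros i Hi. lia.
  - destruct IH as [M1 HM1]; [intros i Hi; apply Hex; lia|].
    destruct (Hex N ltac:(lia)) as [M2 HM2].
    exists (Rmax M1 M2). intros i Hi.
    destruct (Nat.eq_dec i N) as [->|Hne].
    + exact (Hmon N M2 _ (Rmax_r M1 M2) HM2).
    + exact (Hmon i M1 _ (Rmax_l M1 M2) (HM1 i ltac:(lia))).
Qed.

Lemma uniform_pos_lower_bound (N : nat) (Q : nat -> R -> Prop) :
  (forall i m m', 0 < m' <= m -> Q i m -> Q i m') ->
  (forall i, (i < N)%nat -> exists m, 0 < m /\ Q i m) ->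
  exists m, 0 < m /\ forall i, (i < N)%nat -> Q i m.
Proof.
  intros Hmon. induction N as [|N IH]; intros Hex.
  - exists 1. split; [lra|]. intros i Hi. lia.
  - destruct IH as [m1 [Hm1 HM1]]; [intros i Hi; apply Hex; lia|].
    destruct (Hex N ltac:(lia)) as [m2 [Hm2 HM2]].
    assert (Hm : 0 < Rmin m1 m2) by (apply Rmin_glb_lt; assumption).
    exists (Rmin m1 m2). split; [exact Hm|]. intros i Hi.
    destruct (Nat.eq_dec i N) as [->|Hne].
    + exact (Hmon N m2 _ (conj Hm (Rmin_r m1 m2)) HM2).
    + exact (Hmon i m1 _ (conj Hm (Rmin_l m1 m2)) (HM1 i ltac:(lia))).
Qed.

Definition cont_within_ed (A : R -> Prop) (g : R -> R) (x : R) : Prop :=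
  forall e, 0 < e -> exists del, 0 < del /\
    forall z, A z -> Rabs (z - x) < del -> Rabs (g z - g x) < e.

Lemma cont_within_ed_iff (A : R -> Prop) (g : R -> R) (x : R) :
  cont_within A g x <-> cont_within_ed A g x.
Proof.
  split.
  - intros Hc e He.
    destruct (Hc (ball (g x) (mkposreal e He)) (locally_ball _ _)) as [[del Hdel] HP].
    exists del. split; [exact Hdel|]. intros z Az Hz. exact (HP z Hz Az).
  - intros Hc. apply filterlim_locally. intros [e He].
    destruct (Hc e He) as [del [Hdel HP]]. exists (mkposreal del Hdel).
    intros z Hz Az. exact (HP z Az Hz).
Qed.

Lemma cont_within_ed_subset (A B : R -> Prop) (g : R -> R) (x : R) :
  (forall z, A z -> B z) -> cont_within_ed B g x -> cont_within_ed A g x.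
Proof.
  intros HAB Hc e He. destruct (Hc e He) as [del [Hdel HP]].
  exists del. split; [exact Hdel|]. intros z Az. apply HP, HAB, Az.
Qed.

Lemma cont_within_ed_const (A : R -> Prop) (a x : R) : cont_within_ed A (fun _ => a) x.
Proof.
  intros e He. exists 1. split; [lra|]. intros z _ _.
  rewrite Rminus_diag, Rabs_R0. exact He.
Qed.

Lemma cont_within_ed_plus (A : R -> Prop) (f g : R -> R) (x : R) :
  cont_within_ed A f x -> cont_within_ed A g x -> cont_within_ed A (fun z => f z + g z) x.
Proof.
  rewrite <- !cont_within_ed_iff. intros Hf Hg.
  exact (filterlim_comp_2 f g Rplus Hf Hg (filterlim_plus (V := R_NormedModule) (f x) (g x))).
Qed.

Lemma cont_within_ed_mult (A : R -> Prop) (f g : R -> R) (x : R) :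
  cont_within_ed A f x -> cont_within_ed A g x -> cont_within_ed A (fun z => f z * g z) x.
Proof.
  rewrite <- !cont_within_ed_iff. intros Hf Hg.
  exact (filterlim_comp_2 f g Rmult Hf Hg (filterlim_mult (K := R_AbsRing) (f x) (g x))).
Qed.

Lemma cont_within_ed_comp (A : R -> Prop) (f th : R -> R) (x : R) :
  (forall z, A z -> A (th z)) -> cont_within_ed A th x -> cont_within_ed A f (th x) ->
  cont_within_ed A (fun z => f (th z)) x.
Proof.
  intros HA Hth Hf e He. destruct (Hf e He) as [d1 [Hd1 P1]].
  destruct (Hth d1 Hd1) as [d2 [Hd2 P2]].
  exists d2. split; [exact Hd2|]. intros z Az Hz. apply P1; [apply HA, Az|apply P2; assumption].
Qed.

Lemma cont_within_ed_comp_cont (A : R -> Prop) (k f : R -> R) (x : R) :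
  continuity_pt k (f x) -> cont_within_ed A f x -> cont_within_ed A (fun z => k (f z)) x.
Proof.
  intros Hk Hf e He.
  destruct (Hk e He) as [d1 [Hd1 P1]]. destruct (Hf d1 Hd1) as [d2 [Hd2 P2]].
  exists d2. split; [exact Hd2|]. intros z Az Hz.
  destruct (Req_dec (f z) (f x)) as [Heq|Hne].
  - rewrite Heq, Rminus_diag, Rabs_R0. exact He.
  - apply (P1 (f z)). split; [split; [exact I|congruence]|]. apply P2; assumption.
Qed.

(* Stdlib's extreme value theorems need continuity on all of R, which composing with the clamp to
   [a, b] provides. *)
Definition clamp (a b z : R) : R := Rmax a (Rmin b z).

Lemma clamp_in (a b z : R) : a <= b -> a <= clamp a b z <= b.
Proof. intros. unfold clamp, Rmax, Rmin. repeat destruct Rle_dec; lra. Qed.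

Lemma clamp_id (a b x : R) : a <= x <= b -> clamp a b x = x.
Proof. intros. unfold clamp, Rmax, Rmin. repeat destruct Rle_dec; lra. Qed.

Lemma clamp_dist (a b z x : R) : a <= x <= b -> Rabs (clamp a b z - x) <= Rabs (z - x).
Proof.
  intros Hx. unfold clamp, Rmax, Rmin. repeat destruct Rle_dec as [?|?%Rnot_le_lt];
  repeat match goal with |- context [Rabs ?u] => destruct (Rcase_abs u) as [?|?];
    [rewrite (Rabs_left u) by lra | rewrite (Rabs_right u) by lra] end; lra.
Qed.

Lemma continuity_pt_clamp (a b : R) (g : R -> R) : a <= b ->
  (forall x, a <= x <= b -> cont_within_ed (fun z => a <= z <= b) g x) ->
  forall x, a <= x <= b -> continuity_pt (fun z => g (clamp a b z)) x.
Proof.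
  intros Hab Hc x Hx e He. destruct (Hc x Hx e He) as [del [Hdel HP]].
  exists del. split; [exact Hdel|]. intros z [_ Hz]. simpl in *. unfold R_dist in *.
  rewrite (clamp_id a b x Hx). apply HP; [apply clamp_in, Hab|].
  eapply Rle_lt_trans; [apply clamp_dist, Hx|exact Hz].
Qed.

Lemma interval_extreme_values (a b : R) (g : R -> R) : a <= b ->
  (forall x, a <= x <= b -> cont_within_ed (fun z => a <= z <= b) g x) ->
  exists xm xM, a <= xm <= b /\ a <= xM <= b /\
    forall x, a <= x <= b -> g xm <= g x <= g xM.
Proof.
  intros Hab Hc. assert (Hg := continuity_pt_clamp a b g Hab Hc).
  destruct (continuity_ab_maj _ a b Hab Hg) as [xM [HM _]].
  destruct (continuity_ab_min _ a b Hab Hg) as [xm [Hm _]].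
  exists (clamp a b xm), (clamp a b xM).
  split; [apply clamp_in, Hab|]. split; [apply clamp_in, Hab|]. intros x Hx.
  rewrite <- (clamp_id a b x Hx). split; [apply Hm|apply HM]; exact Hx.
Qed.

(** * Geometry of H *)

Section HsetGeometry.
Variables (n : nat) (c d : nat -> R).
Hypothesis Hcd : forall j, (j < n)%nat -> c j < d j.

Lemma Hset_Hbar (x : R) : Hset n c d x -> Hbar n c d x.
Proof. intros [j [Hj Hx]]. exists j. split; [exact Hj|lra]. Qed.

Lemma Hset_open (x : R) : Hset n c d x ->
  exists del, 0 < del /\ forall z, Rabs (z - x) < del -> Hset n c d z.
Proof.
  intros [j [Hj Hx]]. exists (Rmin (x - c j) (d j - x)). split.
  - apply Rmin_glb_lt; lra.
  - intros z Hz. exists j. split; [exact Hj|].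
    assert (H1 := Rmin_l (x - c j) (d j - x)). assert (H2 := Rmin_r (x - c j) (d j - x)).
    apply Rabs_def2 in Hz. lra.
Qed.

Lemma Hset_locally (x : R) : Hset n c d x -> locally x (Hset n c d).
Proof.
  intros Hx. destruct (Hset_open x Hx) as [del [Hdel HP]].
  exists (mkposreal del Hdel). intros y Hy. apply HP, Hy.
Qed.

Lemma Hbar_approx (x eta : R) : Hbar n c d x -> 0 < eta ->
  exists z, Hset n c d z /\ Rabs (z - x) < eta.
Proof.
  intros [j [Hj Hx]] Heta. specialize (Hcd j Hj).
  set (t := Rmin 1 (eta / (d j - c j))).
  assert (Ht1 : t <= 1) by apply Rmin_l.
  assert (Ht2 : t <= eta / (d j - c j)) by apply Rmin_r.
  assert (Ht0 : 0 < t) by (apply Rmin_glb_lt; [lra|apply Rdiv_lt_0_compat; lra]).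
  assert (Ht3 : t * (d j - c j) <= eta).
  { apply Rmult_le_compat_r with (r := d j - c j) in Ht2; [|lra].
    unfold Rdiv in Ht2. rewrite Rmult_assoc, Rinv_l in Ht2; lra. }
  exists (x + t * ((c j + d j) / 2 - x)). split.
  - exists j. split; [exact Hj|]. split; nra.
  - replace (x + t * ((c j + d j) / 2 - x) - x) with (t * ((c j + d j) / 2 - x)) by ring.
    rewrite Rabs_mult, Rabs_right by lra.
    assert (Rabs ((c j + d j) / 2 - x) <= (d j - c j) / 2) by (apply Rabs_le; lra).
    nra.
Qed.

Lemma Hbar_le_of_Hset (h : R -> R) (x K : R) :
  cont_within_ed (Hbar n c d) h x -> Hbar n c d x ->
  (forall z, Hset n c d z -> h z <= K) -> h x <= K.
Proof.
  intros Hc Hx HK. destruct (Rle_or_lt (h x) K) as [|Hlt]; [assumption|].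
  destruct (Hc (h x - K) ltac:(lra)) as [del [Hdel HP]].
  destruct (Hbar_approx x del Hx Hdel) as [z [Hz Hzx]].
  specialize (HP z (Hset_Hbar z Hz) Hzx). specialize (HK z Hz).
  apply Rabs_def2 in HP. lra.
Qed.

Lemma not_Hbar_open (y : R) : ~ Hbar n c d y ->
  exists del, 0 < del /\ forall z, Rabs (z - y) < del -> ~ Hbar n c d z.
Proof.
  intros Hy.
  destruct (uniform_pos_lower_bound n
              (fun i m => forall z, Rabs (z - y) < m -> ~ (c i <= z <= d i))) as [m [Hm HP]].
  - intros i m m' Hmm HQ z Hz. apply HQ. lra.
  - intros i Hi. assert (Hyi : ~ (c i <= y <= d i)) by (intro; apply Hy; exists i; auto).
    destruct (Rlt_or_le y (c i)).
    + exists (c i - y). split; [lra|]. intros z Hz. apply Rabs_def2 in Hz. lra.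
    + exists (y - d i). split; [lra|]. intros z Hz. apply Rabs_def2 in Hz. lra.
  - exists m. split; [exact Hm|]. intros z Hz [i [Hi Hzi]]. exact (HP i Hi z Hz Hzi).
Qed.

Lemma Hbar_stable (th : R -> R) :
  (forall x, Hbar n c d x -> cont_within_ed (Hbar n c d) th x) ->
  (forall x, Hset n c d x -> Hset n c d (th x)) ->
  forall x, Hbar n c d x -> Hbar n c d (th x).
Proof.
  intros Hc HH x Hx. apply NNPP. intro Hn.
  destruct (not_Hbar_open _ Hn) as [del [Hdel HP]].
  destruct (Hc x Hx del Hdel) as [del2 [Hdel2 HP2]].
  destruct (Hbar_approx x del2 Hx Hdel2) as [z [Hz Hzx]].
  apply (HP (th z)); [|apply Hset_Hbar, HH, Hz].
  apply HP2; [apply Hset_Hbar, Hz|exact Hzx].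
Qed.

Lemma Hbar_cont_interval (g : R -> R) (i : nat) :
  (forall x, Hbar n c d x -> cont_within_ed (Hbar n c d) g x) -> (i < n)%nat ->
  forall x, c i <= x <= d i -> cont_within_ed (fun z => c i <= z <= d i) g x.
Proof.
  intros Hc Hi x Hx. apply (cont_within_ed_subset _ (Hbar n c d)).
  - intros z Hz. exists i. split; assumption.
  - apply Hc. exists i. split; assumption.
Qed.

Lemma Hbar_bounded (g : R -> R) :
  (forall x, Hbar n c d x -> cont_within_ed (Hbar n c d) g x) ->
  exists M, forall x, Hbar n c d x -> Rabs (g x) <= M.
Proof.
  intros Hc.
  destruct (uniform_upper_bound n
              (fun i M => forall x, c i <= x <= d i -> Rabs (g x) <= M)) as [M HM].
  - intros i M M' HMM HQ x Hx. specialize (HQ x Hx). lra.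
  - intros i Hi.
    destruct (interval_extreme_values (c i) (d i) g) as [xm [xM [_ [_ Hext]]]].
    + specialize (Hcd i Hi). lra.
    + apply Hbar_cont_interval; assumption.
    + exists (Rmax (g xM) (- g xm)). intros x Hx. specialize (Hext x Hx).
      assert (H1 := Rmax_l (g xM) (- g xm)). assert (H2 := Rmax_r (g xM) (- g xm)).
      apply Rabs_le. lra.
  - exists M. intros x [i [Hi Hx]]. exact (HM i Hi x Hx).
Qed.

Lemma Hbar_pos_lower_bound (g : R -> R) :
  (forall x, Hbar n c d x -> cont_within_ed (Hbar n c d) g x) ->
  (forall x, Hbar n c d x -> 0 < g x) ->
  exists m, 0 < m /\ forall x, Hbar n c d x -> m <= g x.
Proof.
  intros Hc Hp.
  destruct (uniform_pos_lower_bound n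
              (fun i m => forall x, c i <= x <= d i -> m <= g x)) as [m [Hm HM]].
  - intros i m m' Hmm HQ x Hx. specialize (HQ x Hx). lra.
  - intros i Hi.
    destruct (interval_extreme_values (c i) (d i) g) as [xm [xM [Hxm [_ Hext]]]].
    + specialize (Hcd i Hi). lra.
    + apply Hbar_cont_interval; assumption.
    + exists (g xm). split; [apply Hp; exists i; split; assumption|].
      intros x Hx. apply Hext, Hx.
  - exists m. split; [exact Hm|]. intros x [i [Hi Hx]]. exact (HM i Hi x Hx).
Qed.

Lemma Hbar_ratio_bounds (g F : R -> R) (x lo up : R) :
  cont_within_ed (Hbar n c d) g x -> cont_within_ed (Hbar n c d) F x -> Hbar n c d x -> 0 < F x ->
  (forall z, Hset n c d z -> lo * F z <= g z <= up * F z) ->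
  lo <= g x / F x <= up.
Proof.
  intros Hg HF Hx HFx Hbd.
  assert (Hcomb : forall a e, cont_within_ed (Hbar n c d) (fun z => a * g z + e * F z) x).
  { intros a e. apply cont_within_ed_plus; apply cont_within_ed_mult;
      solve [apply cont_within_ed_const|assumption]. }
  assert (Hup : 1 * g x + (- up) * F x <= 0).
  { apply (Hbar_le_of_Hset (fun z => 1 * g z + (- up) * F z)); [apply Hcomb|exact Hx|].
    intros z Hz. destruct (Hbd z Hz). lra. }
  assert (Hlo : (- 1) * g x + lo * F x <= 0).
  { apply (Hbar_le_of_Hset (fun z => (- 1) * g z + lo * F z)); [apply Hcomb|exact Hx|].
    intros z Hz. destruct (Hbd z Hz). lra. }
  split; [apply (Rmult_le_reg_r (F x))|apply (Rmult_le_reg_r (F x))]; try exact HFx;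
    unfold Rdiv; rewrite Rmult_assoc, Rinv_l by lra; lra.
Qed.
End HsetGeometry.

(** * Derivatives along words *)

Lemma is_derive_value_eq (f : R -> R) (x l l' : R) : is_derive f x l -> l = l' -> is_derive f x l'.
Proof. intros H ->; exact H. Qed.

Lemma is_derive_Rconst (a x : R) : is_derive (fun _ => a) x 0.
Proof. exact (is_derive_const a x). Qed.

Lemma is_derive_Rmult (f g : R -> R) (x df dg : R) : is_derive f x df -> is_derive g x dg ->
  is_derive (fun t => f t * g t) x (df * g x + f x * dg).
Proof. intros Hf Hg. apply (is_derive_mult f g x df dg Hf Hg). intros; apply Rmult_comm. Qed.

Lemma is_derive_Rcomp (f g : R -> R) (x df dg : R) : is_derive f (g x) df -> is_derive g x dg ->
  is_derive (fun t => f (g t)) x (dg * df).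
Proof. exact (is_derive_comp f g x df dg). Qed.

Lemma is_derive_Rplus (f g : R -> R) (x df dg : R) : is_derive f x df -> is_derive g x dg ->
  is_derive (fun t => f t + g t) x (df + dg).
Proof. exact (is_derive_plus f g x df dg). Qed.

Lemma is_derive_Rpower_l (s u : R) : 0 < u -> is_derive (fun t => Rpower t s) u (s / u * Rpower u s).
Proof.
  intros Hu. unfold Rpower. eapply is_derive_value_eq.
  - apply (is_derive_Rcomp exp (fun t => s * ln t)); [apply is_derive_exp|].
    apply (is_derive_scal ln u s), is_derive_ln, Hu.
  - field. lra.
Qed.

Definition twice_diff_on (A : R -> Prop) (f : R -> R) : Prop :=
  forall y, A y -> ex_derive f y /\ ex_derive (Derive f) y.

Lemma twice_diff_is_derive (A : R -> Prop) (f : R -> R) (y : R) : twice_diff_on A f -> A y ->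
  is_derive f y (Derive f y) /\ is_derive (Derive f) y (Derive_n f 2 y).
Proof. intros Hf Hy. destruct (Hf y Hy). split; apply Derive_correct; assumption. Qed.

Definition word_over (p : nat) (w : list nat) : Prop := List.Forall (fun j => (j < p)%nat) w.

Lemma theta_w_in (A : R -> Prop) (p : nat) (theta : nat -> R -> R) (w : list nat) (y : R) :
  (forall j z, (j < p)%nat -> A z -> A (theta j z)) -> word_over p w -> A y -> A (theta_w theta w y).
Proof. intros HA Hw; revert y; induction Hw; intros y Hy; simpl; auto. Qed.

Lemma word_over_snoc (p : nat) (u : list nat) (j : nat) :
  word_over p u -> (j < p)%nat -> word_over p (u ++ j :: nil).
Proof. intros Hu Hj. apply List.Forall_app. split; [exact Hu|constructor; [exact Hj|constructor]]. Qed.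

(* Chain-rule formulas along a word: [dtheta_w] and [d2theta_w] for [D theta_w] and [D^2 theta_w],
   [logd_b_w] for [D b_w / b_w] and [dlogd_b_w] for its derivative. *)
Fixpoint dtheta_w (theta : nat -> R -> R) (w : list nat) (y : R) : R :=
  match w with
  | nil => 1
  | j :: w' => dtheta_w theta w' (theta j y) * Derive (theta j) y
  end.

Fixpoint d2theta_w (theta : nat -> R -> R) (w : list nat) (y : R) : R :=
  match w with
  | nil => 0
  | j :: w' => d2theta_w theta w' (theta j y) * Derive (theta j) y ^ 2
               + dtheta_w theta w' (theta j y) * Derive_n (theta j) 2 y
  end.

Fixpoint logd_b_w (b theta : nat -> R -> R) (w : list nat) (y : R) : R :=
  match w with
  | nil => 0
  | j :: w' => logd_b_w b theta w' (theta j y) * Derive (theta j) y + Derive (b j) y / b j y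
  end.

Fixpoint dlogd_b_w (b theta : nat -> R -> R) (w : list nat) (y : R) : R :=
  match w with
  | nil => 0
  | j :: w' => dlogd_b_w b theta w' (theta j y) * Derive (theta j) y ^ 2
               + logd_b_w b theta w' (theta j y) * Derive_n (theta j) 2 y
               + (Derive_n (b j) 2 y / b j y - (Derive (b j) y / b j y) ^ 2)
  end.

Section WordSnoc.
Variables (b theta : nat -> R -> R) (j : nat).

Lemma theta_w_app (u v : list nat) (y : R) :
  theta_w theta (u ++ v) y = theta_w theta v (theta_w theta u y).
Proof. revert y; induction u; simpl; auto. Qed.

Lemma theta_w_snoc (u : list nat) (y : R) :
  theta_w theta (u ++ j :: nil) y = theta j (theta_w theta u y).
Proof. apply theta_w_app. Qed.

Lemma dtheta_w_snoc (u : list nat) (y : R) :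
  dtheta_w theta (u ++ j :: nil) y = Derive (theta j) (theta_w theta u y) * dtheta_w theta u y.
Proof.
  revert y; induction u as [|i u IH]; intros y; cbn [app theta_w dtheta_w logd_b_w];
  [ring|rewrite IH; ring].
Qed.

Lemma d2theta_w_snoc (u : list nat) (y : R) :
  d2theta_w theta (u ++ j :: nil) y =
  Derive_n (theta j) 2 (theta_w theta u y) * dtheta_w theta u y ^ 2
  + Derive (theta j) (theta_w theta u y) * d2theta_w theta u y.
Proof.
  revert y; induction u as [|i u IH]; intros y; cbn [app theta_w dtheta_w d2theta_w logd_b_w dlogd_b_w];
  [ring|].
  rewrite IH, dtheta_w_snoc. ring.
Qed.

Lemma logd_b_w_snoc (u : list nat) (y : R) :
  logd_b_w b theta (u ++ j :: nil) y =
  logd_b_w b theta u y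
  + Derive (b j) (theta_w theta u y) / b j (theta_w theta u y) * dtheta_w theta u y.
Proof.
  revert y; induction u as [|i u IH]; intros y; cbn [app theta_w dtheta_w logd_b_w];
  [ring|rewrite IH; ring].
Qed.

Lemma dlogd_b_w_snoc (u : list nat) (y : R) :
  let z := theta_w theta u y in
  dlogd_b_w b theta (u ++ j :: nil) y =
  dlogd_b_w b theta u y
  + (Derive_n (b j) 2 z / b j z - (Derive (b j) z / b j z) ^ 2) * dtheta_w theta u y ^ 2
  + Derive (b j) z / b j z * d2theta_w theta u y.
Proof.
  revert y; induction u as [|i u IH]; intros y; cbn [app theta_w dtheta_w d2theta_w logd_b_w dlogd_b_w];
  [ring|].
  rewrite IH, logd_b_w_snoc. ring.
Qed.
End WordSnoc.

Section WordCalculus.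
Variables (A : R -> Prop) (p : nat) (b theta : nat -> R -> R).
Hypothesis A_open : forall y, A y -> locally y A.
Hypothesis theta_diff : forall j, (j < p)%nat -> twice_diff_on A (theta j).
Hypothesis b_diff : forall j, (j < p)%nat -> twice_diff_on A (b j).
Hypothesis theta_A : forall j y, (j < p)%nat -> A y -> A (theta j y).
Hypothesis b_pos : forall j y, (j < p)%nat -> A y -> 0 < b j y.

Lemma b_w_pos (w : list nat) (y : R) : word_over p w -> A y -> 0 < b_w b theta w y.
Proof.
  intros Hw; revert y; induction Hw as [|j w' Hj Hw' IH]; intros y Hy; simpl; [lra|].
  apply Rmult_lt_0_compat; auto.
Qed.

Lemma is_derive_theta_w (w : list nat) (y : R) : word_over p w -> A y ->
  is_derive (theta_w theta w) y (dtheta_w theta w y).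
Proof.
  intros Hw; revert y; induction Hw as [|j w' Hj Hw' IH]; intros y Hy; simpl.
  - apply (is_derive_id y).
  - destruct (twice_diff_is_derive _ _ y (theta_diff j Hj) Hy) as [Dt _].
    eapply is_derive_value_eq.
    + apply (is_derive_Rcomp (theta_w theta w')); [apply IH, theta_A|]; eassumption.
    + ring.
Qed.

Lemma is_derive_b_w (w : list nat) (y : R) : word_over p w -> A y ->
  is_derive (b_w b theta w) y (b_w b theta w y * logd_b_w b theta w y).
Proof.
  intros Hw; revert y; induction Hw as [|j w' Hj Hw' IH]; intros y Hy; simpl.
  - eapply is_derive_value_eq; [apply is_derive_Rconst|ring].
  - destruct (twice_diff_is_derive _ _ y (theta_diff j Hj) Hy) as [Dt _].
    destruct (twice_diff_is_derive _ _ y (b_diff j Hj) Hy) as [Db _].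
    assert (Hb := b_pos j y Hj Hy).
    eapply is_derive_value_eq.
    + apply is_derive_Rmult; [|exact Db].
      apply (is_derive_Rcomp (b_w b theta w')); [apply IH, theta_A|]; eassumption.
    + cbv beta. field. lra.
Qed.

Lemma is_derive_logd_b_w (w : list nat) (y : R) : word_over p w -> A y ->
  is_derive (logd_b_w b theta w) y (dlogd_b_w b theta w y).
Proof.
  intros Hw; revert y; induction Hw as [|j w' Hj Hw' IH]; intros y Hy; simpl.
  - apply is_derive_Rconst.
  - destruct (twice_diff_is_derive _ _ y (theta_diff j Hj) Hy) as [Dt Dt2].
    destruct (twice_diff_is_derive _ _ y (b_diff j Hj) Hy) as [Db Db2].
    assert (Hb := b_pos j y Hj Hy).
    eapply is_derive_value_eq.
    + apply is_derive_Rplus; [apply is_derive_Rmult; [|exact Dt2]|].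
      * apply (is_derive_Rcomp (logd_b_w b theta w')); [apply IH, theta_A|]; eassumption.
      * apply is_derive_div; [exact Db2|exact Db|lra].
    + cbv beta. simpl. field. lra.
Qed.

Lemma is_derive_Rpower_b_w (w : list nat) (s y : R) : word_over p w -> A y ->
  is_derive (fun t => Rpower (b_w b theta w t) s) y
    (s * logd_b_w b theta w y * Rpower (b_w b theta w y) s).
Proof.
  intros Hw Hy. assert (Hpos := b_w_pos w y Hw Hy).
  eapply is_derive_value_eq.
  - apply (is_derive_Rcomp (fun t => Rpower t s)); [apply is_derive_Rpower_l, Hpos|].
    apply is_derive_b_w; assumption.
  - field. lra.
Qed.

Lemma Derive2_Rpower_b_w (w : list nat) (s y : R) : word_over p w -> A y ->
  Derive_n (fun t => Rpower (b_w b theta w t) s) 2 y =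
  Rpower (b_w b theta w y) s
  * (s * dlogd_b_w b theta w y + s ^ 2 * logd_b_w b theta w y ^ 2).
Proof.
  intros Hw Hy. simpl. apply is_derive_unique.
  apply (is_derive_ext_loc (fun t => s * logd_b_w b theta w t * Rpower (b_w b theta w t) s)).
  - apply (filter_imp A); [|apply A_open, Hy]. intros t Ht.
    symmetry. apply is_derive_unique, is_derive_Rpower_b_w; assumption.
  - eapply is_derive_value_eq.
    + apply is_derive_Rmult; [apply is_derive_scal, is_derive_logd_b_w; assumption|].
      apply is_derive_Rpower_b_w; assumption.
    + cbv beta. ring.
Qed.
End WordCalculus.

Fixpoint psum (a : nat -> R) (N : nat) : R :=
  match N with
  | O => 0
  | S N' => psum a N' + a N'
  end.

Lemma psum_shift (a : nat -> R) (N : nat) : psum a (S N) = a O + psum (fun i => a (S i)) N.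
Proof. induction N as [|N IH]; cbn [psum] in *; [ring|rewrite IH; ring]. Qed.

Lemma psum_ext (a a' : nat -> R) (N : nat) :
  (forall i, (i < N)%nat -> a i = a' i) -> psum a N = psum a' N.
Proof. induction N as [|N IH]; intros Ha; cbn [psum]; [reflexivity|rewrite IH, Ha; auto]. Qed.

Lemma psum_le (a a' : nat -> R) (N : nat) :
  (forall i, (i < N)%nat -> a i <= a' i) -> psum a N <= psum a' N.
Proof.
  induction N as [|N IH]; intros Ha; cbn [psum]; [lra|].
  assert (psum a N <= psum a' N) by (apply IH; auto). specialize (Ha N ltac:(lia)). lra.
Qed.

Lemma psum_ge0 (a : nat -> R) (N : nat) : (forall i, 0 <= a i) -> 0 <= psum a N.
Proof. intros Ha. induction N as [|N IH]; cbn [psum]; [lra|specialize (Ha N); lra]. Qed.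

Lemma psum_plus (a a' : nat -> R) (N : nat) :
  psum (fun i => a i + a' i) N = psum a N + psum a' N.
Proof. induction N as [|N IH]; cbn [psum]; [ring|rewrite IH; ring]. Qed.

Lemma psum_scal (k : R) (a : nat -> R) (N : nat) : psum (fun i => k * a i) N = k * psum a N.
Proof. induction N as [|N IH]; cbn [psum]; [ring|rewrite IH; ring]. Qed.

Lemma psum_mono (a : nat -> R) (N M : nat) :
  (forall i, 0 <= a i) -> (N <= M)%nat -> psum a N <= psum a M.
Proof. intros Ha HNM. induction HNM as [|M _ IH]; cbn [psum]; [lra|specialize (Ha M); lra]. Qed.

Lemma psum_add (a : nat -> R) (N M : nat) : psum a (N + M) = psum a N + psum (fun k => a (N + k)%nat) M.
Proof.
  induction M as [|M IH]; cbn [psum]; [rewrite Nat.add_0_r; ring|].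
  rewrite Nat.add_succ_r. cbn [psum]. rewrite IH. ring.
Qed.

Lemma sum_n_psum (a : nat -> R) (N : nat) : sum_n a N = psum a (S N).
Proof.
  induction N as [|N IH]; [rewrite sum_O; cbn [psum]; rewrite Rplus_0_l; reflexivity|].
  rewrite sum_Sn, IH. reflexivity.
Qed.

Definition conv_sum (a e : nat -> R) (k : nat) : R := psum (fun l => a l * e (k - S l)%nat) k.

Lemma psum_conv_sum_le (a e : nat -> R) (N : nat) : (forall i, 0 <= a i) -> (forall i, 0 <= e i) ->
  psum (conv_sum a e) N <= psum a N * psum e N.
Proof.
  intros Ha He. revert a Ha. induction N as [|N IH]; intros a Ha; [cbn; lra|].
  rewrite (psum_shift (conv_sum a e) N), (psum_shift a N).
  change (conv_sum a e O) with 0. rewrite Rplus_0_l.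
  rewrite (psum_ext _ (fun k => a O * e k + conv_sum (fun l => a (S l)) e k)).
  2:{ intros k _. unfold conv_sum. rewrite psum_shift.
      replace (S k - 1)%nat with k by lia. reflexivity. }
  rewrite psum_plus, psum_scal. cbn [psum].
  assert (IH' := IH (fun l => a (S l)) (fun l => Ha (S l))).
  assert (HeN : psum e N <= psum e N + e N) by (specialize (He N); lra).
  assert (Hsa : 0 <= psum (fun i => a (S i)) N) by (apply psum_ge0; intros; apply Ha).
  assert (Hse : 0 <= psum e N) by (apply psum_ge0, He).
  specialize (Ha O). nra.
Qed.

(* The contraction [a (k + mu) <= q a k] gives [psum a N <= psum a mu / (1 - q)] by strong
   induction on [N]; hence the series converges and dominates its partial sums. *)
Lemma psum_le_Series (a : nat -> R) (mu : nat) (q : R) :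
  (forall k, 0 <= a k) -> (1 <= mu)%nat -> 0 <= q < 1 ->
  (forall k, a (k + mu)%nat <= q * a k) -> forall N, psum a N <= Series a.
Proof.
  intros Ha Hmu Hq Hrec.
  set (B := psum a mu / (1 - q)).
  assert (HB0 : 0 <= psum a mu) by (apply psum_ge0, Ha).
  assert (HB1 : psum a mu <= B).
  { unfold B. apply Rmult_le_reg_r with (1 - q); [lra|].
    unfold Rdiv. rewrite Rmult_assoc, Rinv_l by lra. nra. }
  assert (HB2 : psum a mu + q * B = B) by (unfold B; field; lra).
  assert (Hbd : forall N, psum a N <= B).
  { intros N. induction N as [N IH] using (well_founded_induction Nat.lt_wf_0).
    destruct (Compare_dec.le_lt_dec N mu) as [Hle|Hlt].
    - eapply Rle_trans; [apply psum_mono; eassumption|exact HB1].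
    - replace N with (mu + (N - mu))%nat by lia. rewrite psum_add.
      assert (psum (fun k => a (mu + k)%nat) (N - mu) <= q * psum a (N - mu)).
      { rewrite <- psum_scal. apply psum_le. intros i _. rewrite Nat.add_comm. apply Hrec. }
      assert (psum a (N - mu) <= B) by (apply IH; lia).
      nra. }
  assert (Hinc : forall N, sum_n a N <= sum_n a (S N)).
  { intros N. rewrite !sum_n_psum. cbn [psum]. specialize (Ha (S N)). lra. }
  assert (Hex : ex_finite_lim_seq (sum_n a)).
  { apply (ex_finite_lim_seq_incr _ B); [exact Hinc|]. intros N. rewrite sum_n_psum. apply Hbd. }
  assert (Hlim := Lim_seq_correct' _ Hex).
  intros [|N].
  - assert (H0 := is_lim_seq_incr_compare _ _ Hlim Hinc O).
    rewrite sum_n_psum in H0. cbn [psum] in *. specialize (Ha O). unfold Series. lra.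
  - assert (H0 := is_lim_seq_incr_compare _ _ Hlim Hinc N). rewrite sum_n_psum in H0. exact H0.
Qed.

Lemma pow2_le_of_Rabs_le (x e : R) : Rabs x <= e -> x ^ 2 <= e ^ 2.
Proof. intros Hx. rewrite <- pow2_abs. apply pow_incr. split; [apply Rabs_pos|exact Hx]. Qed.

(** * Bounds along words *)

Lemma word_over_snoc_inv (p : nat) (u : list nat) (j : nat) :
  word_over p (u ++ j :: nil) -> word_over p u /\ (j < p)%nat.
Proof. intros Hw. apply List.Forall_app in Hw as [Hu Hj]. inversion Hj. split; assumption. Qed.

Section WordBounds.
Variables (A : R -> Prop) (p : nat) (b theta : nat -> R -> R) (eps : nat -> R) (C1 C2 M0 : R).
Hypothesis eps_ge0 : forall k, 0 <= eps k.
Hypothesis C1_ge0 : 0 <= C1.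
Hypothesis C2_ge0 : 0 <= C2.
Hypothesis M0_ge0 : 0 <= M0.
Hypothesis theta_A : forall j y, (j < p)%nat -> A y -> A (theta j y).
Hypothesis dtheta_w_le : forall w y, word_over p w -> A y -> Rabs (dtheta_w theta w y) <= eps (length w).
Hypothesis b1_le : forall j z, (j < p)%nat -> A z -> Rabs (Derive (b j) z / b j z) <= C1.
Hypothesis b2_le : forall j z, (j < p)%nat -> A z -> Rabs (Derive_n (b j) 2 z / b j z) <= C2.
Hypothesis theta2_le : forall j z, (j < p)%nat -> A z -> Rabs (Derive_n (theta j) 2 z) <= M0.

(* Second-order chain rule along [u ++ v]: each letter of [v] contributes one [D^2 theta] term,
   weighted by the square of the derivative before it and the derivative after it. *)
Lemma d2theta_w_app_le (v : list nat) : word_over p v -> forall u y, word_over p u -> A y ->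
  Rabs (d2theta_w theta (u ++ v) y) <=
  Rabs (dtheta_w theta v (theta_w theta u y)) * Rabs (d2theta_w theta u y)
  + M0 * psum (fun i => eps (length u + i) ^ 2 * eps (length v - S i)) (length v).
Proof.
  intros Hv. induction Hv as [|j v' Hj Hv' IH]; intros u y Hu Hy.
  - rewrite app_nil_r. cbn [dtheta_w length psum]. rewrite Rabs_R1. lra.
  - replace (u ++ j :: v') with ((u ++ j :: nil) ++ v') by (rewrite <- app_assoc; reflexivity).
    specialize (IH (u ++ j :: nil) y (word_over_snoc p u j Hu Hj) Hy).
    rewrite theta_w_snoc, d2theta_w_snoc, length_app in IH. cbn [length] in IH.
    set (z := theta_w theta u y) in *.
    assert (Hz : A z) by (apply (theta_w_in A p); assumption).
    set (T := dtheta_w theta v' (theta j z)) in *.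
    set (X := dtheta_w theta u y) in *. set (Y := d2theta_w theta u y) in *.
    assert (HT : Rabs T <= eps (length v')) by (apply dtheta_w_le; [|apply theta_A]; assumption).
    assert (HXX : X ^ 2 <= eps (length u) ^ 2) by (apply pow2_le_of_Rabs_le, dtheta_w_le; assumption).
    assert (Ht2 := theta2_le j z Hj Hz).
    assert (Hstep : Rabs T * Rabs (Derive_n (theta j) 2 z * X ^ 2 + Derive (theta j) z * Y)
                    <= eps (length v') * (M0 * eps (length u) ^ 2)
                       + Rabs (T * Derive (theta j) z) * Rabs Y).
    { eapply Rle_trans; [apply Rmult_le_compat_l; [apply Rabs_pos|apply Rabs_triang]|].
      rewrite !Rabs_mult, (Rabs_right (X ^ 2)) by (apply Rle_ge, pow2_ge_0).
      assert (0 <= Rabs T) by apply Rabs_pos. assert (0 <= X ^ 2) by apply pow2_ge_0.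
      assert (0 <= Rabs (Derive_n (theta j) 2 z)) by apply Rabs_pos.
      assert (Rabs T * (Rabs (Derive_n (theta j) 2 z) * X ^ 2)
              <= eps (length v') * (M0 * eps (length u) ^ 2))
        by (apply Rmult_le_compat; [|apply Rmult_le_pos| |apply Rmult_le_compat]; assumption).
      lra. }
    assert (Hsum : psum (fun i => eps (length u + i) ^ 2 * eps (length (j :: v') - S i))
                        (length (j :: v'))
       = eps (length u) ^ 2 * eps (length v')
         + psum (fun i => eps (length u + 1 + i) ^ 2 * eps (length v' - S i)) (length v')).
    { cbn [length]. rewrite psum_shift, Nat.add_0_r.
      replace (S (length v') - 1)%nat with (length v') by lia. f_equal.
      apply psum_ext. intros i _. do 3 f_equal. lia. }
    rewrite Hsum. cbn [dtheta_w]. fold T. lra.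
Qed.

Lemma d2theta_w_le (w : list nat) (y : R) : word_over p w -> A y ->
  Rabs (d2theta_w theta w y) <= M0 * conv_sum (fun k => eps k ^ 2) eps (length w).
Proof.
  intros Hw Hy. assert (H := d2theta_w_app_le w Hw nil y (List.Forall_nil _) Hy).
  cbn [app d2theta_w length Nat.add] in H. rewrite Rabs_R0, Rmult_0_r, Rplus_0_l in H. exact H.
Qed.

Lemma logd_b_w_le (w : list nat) (y : R) : word_over p w -> A y ->
  Rabs (logd_b_w b theta w y) <= C1 * psum eps (length w).
Proof.
  induction w as [|j u IH] using rev_ind; intros Hw Hy.
  - cbn. rewrite Rabs_R0. lra.
  - destruct (word_over_snoc_inv p u j Hw) as [Hu Hj].
    rewrite logd_b_w_snoc, length_app, Nat.add_1_r. cbn [psum].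
    assert (Hz : A (theta_w theta u y)) by (apply (theta_w_in A p); assumption).
    assert (Hq := b1_le j _ Hj Hz). assert (HX := dtheta_w_le u y Hu Hy).
    eapply Rle_trans; [apply Rabs_triang|]. rewrite Rabs_mult.
    assert (Rabs (logd_b_w b theta u y) <= C1 * psum eps (length u)) by (apply IH; assumption).
    assert (Rabs (Derive (b j) (theta_w theta u y) / b j (theta_w theta u y))
            * Rabs (dtheta_w theta u y) <= C1 * eps (length u))
      by (apply Rmult_le_compat; [apply Rabs_pos|apply Rabs_pos|exact Hq|exact HX]).
    lra.
Qed.

Lemma dlogd_b_w_le (w : list nat) (y : R) : word_over p w -> A y ->
  let beta k := M0 * conv_sum (fun l => eps l ^ 2) eps k in
  - psum (fun k => (C1 ^ 2 + C2) * eps k ^ 2 + C1 * beta k) (length w)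
  <= dlogd_b_w b theta w y <=
  psum (fun k => C2 * eps k ^ 2 + C1 * beta k) (length w).
Proof.
  intros Hw Hy beta. revert Hw. induction w as [|j u IH] using rev_ind; intros Hw.
  - cbn. lra.
  - destruct (word_over_snoc_inv p u j Hw) as [Hu Hj].
    rewrite dlogd_b_w_snoc, length_app, Nat.add_1_r. cbn [psum].
    set (z := theta_w theta u y).
    assert (Hz : A z) by (apply (theta_w_in A p); assumption).
    set (q1 := Derive (b j) z / b j z). set (q2 := Derive_n (b j) 2 z / b j z).
    set (X := dtheta_w theta u y). set (Y := d2theta_w theta u y).
    assert (Hq1 : q1 ^ 2 <= C1 ^ 2) by (apply pow2_le_of_Rabs_le, b1_le; assumption).
    assert (Hq2 := b2_le j z Hj Hz). fold q2 in Hq2. apply Rabs_le_between in Hq2.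
    assert (HXX : X ^ 2 <= eps (length u) ^ 2) by (apply pow2_le_of_Rabs_le, dtheta_w_le; assumption).
    assert (Hq1Y : Rabs (q1 * Y) <= C1 * beta (length u)).
    { rewrite Rabs_mult.
      apply Rmult_le_compat; [apply Rabs_pos|apply Rabs_pos|apply b1_le; assumption|].
      apply d2theta_w_le; assumption. }
    apply Rabs_le_between in Hq1Y.
    assert (0 <= q1 ^ 2) by apply pow2_ge_0. assert (0 <= X ^ 2) by apply pow2_ge_0.
    assert (Hup : (q2 - q1 ^ 2) * X ^ 2 <= C2 * eps (length u) ^ 2) by nra.
    assert (Hlo : - ((C1 ^ 2 + C2) * eps (length u) ^ 2) <= (q2 - q1 ^ 2) * X ^ 2) by nra.
    destruct (IH Hu). lra.
Qed.

Lemma log_derivatives_le (S1 S2 : R) :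
  (forall N, psum eps N <= S1) -> (forall N, psum (fun k => eps k ^ 2) N <= S2) ->
  forall w y, word_over p w -> A y ->
  Rabs (logd_b_w b theta w y) <= C1 * S1 /\
  - (S2 * (C1 ^ 2 + C2 + C1 * M0 * S1)) <= dlogd_b_w b theta w y <= S2 * (C2 + C1 * M0 * S1).
Proof.
  intros HS1 HS2 w y Hw Hy.
  set (N := length w).
  assert (HE : psum eps N <= S1) by apply HS1.
  assert (HE2 : psum (fun k => eps k ^ 2) N <= S2) by apply HS2.
  assert (HE0 : 0 <= psum eps N) by (apply psum_ge0, eps_ge0).
  assert (HE20 : 0 <= psum (fun k => eps k ^ 2) N) by (apply psum_ge0; intros; apply pow2_ge_0).
  assert (Hconv : psum (conv_sum (fun l => eps l ^ 2) eps) N <= S2 * S1).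
  { eapply Rle_trans; [apply psum_conv_sum_le; [intros; apply pow2_ge_0|exact eps_ge0]|].
    apply Rmult_le_compat; assumption. }
  assert (HC : C1 * (M0 * psum (conv_sum (fun l => eps l ^ 2) eps) N) <= C1 * M0 * (S2 * S1)).
  { rewrite <- Rmult_assoc. apply Rmult_le_compat_l; [apply Rmult_le_pos|]; assumption. }
  destruct (dlogd_b_w_le w y Hw Hy) as [Hlo Hup]. cbv zeta in Hlo, Hup.
  rewrite psum_plus, !psum_scal in Hlo, Hup. fold N in Hlo, Hup.
  assert (0 <= C1 ^ 2) by apply pow2_ge_0.
  split; [|split].
  - eapply Rle_trans; [apply logd_b_w_le; assumption|]. apply Rmult_le_compat_l; assumption.
  - assert ((C1 ^ 2 + C2) * psum (fun k => eps k ^ 2) N <= (C1 ^ 2 + C2) * S2)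
      by (apply Rmult_le_compat_l; lra).
    lra.
  - assert (C2 * psum (fun k => eps k ^ 2) N <= C2 * S2) by (apply Rmult_le_compat_l; assumption).
    lra.
Qed.
End WordBounds.

Lemma second_log_derivative_bounds (s a q K Bl Bu : R) :
  0 < s -> Rabs a <= K -> - Bl <= q <= Bu ->
  - (s * Bl) <= s * q + s ^ 2 * a ^ 2 <= s ^ 2 * K ^ 2 + s * Bu.
Proof.
  intros Hs Ha Hq. assert (Haa := pow2_le_of_Rabs_le a K Ha).
  assert (0 <= a ^ 2) by apply pow2_ge_0. assert (0 < s ^ 2) by (apply pow_lt, Hs).
  split; nra.
Qed.

(** * Lipschitz constants and derivatives *)

Lemma Rabs_derive_le_of_lipschitz (f : R -> R) (y l K : R) : is_derive f y l ->
  (exists del, 0 < del /\ forall z, Rabs (z - y) < del -> Rabs (f z - f y) <= K * Rabs (z - y)) ->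
  Rabs l <= K.
Proof.
  intros Hd [del [Hdel HL]]. apply is_derive_Reals in Hd.
  destruct (Rle_or_lt (Rabs l) K) as [|Hlt]; [assumption|exfalso].
  destruct (Hd (Rabs l - K) ltac:(lra)) as [[dl Hdl] Hp]. simpl in Hp.
  set (h := Rmin dl del / 2).
  assert (Hm : 0 < Rmin dl del) by (apply Rmin_glb_lt; assumption).
  assert (Hh1 : h < dl) by (unfold h; assert (Rmin dl del <= dl) by apply Rmin_l; lra).
  assert (Hh2 : h < del) by (unfold h; assert (Rmin dl del <= del) by apply Rmin_r; lra).
  assert (Hh0 : 0 < h) by (unfold h; lra).
  specialize (Hp h ltac:(lra)). rewrite Rabs_right in Hp by lra. specialize (Hp Hh1).
  specialize (HL (y + h)). replace (y + h - y) with h in HL by ring.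
  rewrite Rabs_right in HL by lra. specialize (HL Hh2).
  assert (Hq : Rabs ((f (y + h) - f y) / h) <= K).
  { rewrite Rabs_div by lra. rewrite (Rabs_right h) by lra.
    apply Rmult_le_reg_r with h; [exact Hh0|]. unfold Rdiv. rewrite Rmult_assoc, Rinv_l by lra. lra. }
  assert (Rabs l <= Rabs ((f (y + h) - f y) / h) + Rabs ((f (y + h) - f y) / h - l)).
  { replace l with ((f (y + h) - f y) / h - ((f (y + h) - f y) / h - l)) at 1 by ring.
    eapply Rle_trans; [apply Rabs_triang|]. rewrite Rabs_Ropp. lra. }
  lra.
Qed.

Lemma interval_lipschitz_of_Derive (f : R -> R) (a b D : R) :
  (forall z, a < z < b -> is_derive f z (Derive f z)) ->
  (forall z, a < z < b -> Rabs (Derive f z) <= D) ->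
  forall x y, a < x < b -> a < y < b -> Rabs (f x - f y) <= D * Rabs (x - y).
Proof.
  intros Hd HD x y Hx Hy.
  assert (Hin : forall z, Rmin y x <= z <= Rmax y x -> a < z < b)
    by (intros z Hz; unfold Rmin, Rmax in Hz; destruct Rle_dec; lra).
  destruct (MVT_gen f y x (Derive f)) as [xi [Hxi Heq]].
  - intros z Hz. apply Hd, Hin. lra.
  - intros z Hz. apply continuity_pt_filterlim.
    apply (ex_derive_continuous (K := R_AbsRing) (V := R_NormedModule) f z).
    eexists. apply Hd, Hin, Hz.
  - rewrite Heq, Rabs_mult. apply Rmult_le_compat_r; [apply Rabs_pos|apply HD, Hin, Hxi].
Qed.

Lemma Rabs_sub_le_of_bounded (f : R -> R) (T g x y : R) :
  Rabs (f x) <= T -> Rabs (f y) <= T -> 0 < g <= Rabs (x - y) ->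
  Rabs (f x - f y) <= 2 * T / g * Rabs (x - y).
Proof.
  intros Hx Hy [Hg Hxy].
  assert (H2T : Rabs (f x - f y) <= 2 * T).
  { unfold Rminus. eapply Rle_trans; [apply Rabs_triang|]. rewrite Rabs_Ropp. lra. }
  assert (0 <= T) by (assert (0 <= Rabs (f x)) by apply Rabs_pos; lra).
  replace (2 * T) with (2 * T / g * g) in H2T by (field; lra).
  eapply Rle_trans; [exact H2T|].
  apply Rmult_le_compat_l; [apply Rdiv_le_0_compat; lra|exact Hxy].
Qed.

Section HsetLipschitz.
Variables (n : nat) (c d : nat -> R).
Hypothesis Hdisj : forall i j, (i < n)%nat -> (j < n)%nat -> i <> j -> d i < c j \/ d j < c i.

(* Within one interval the mean value theorem applies; two points of different intervals are
   at least the gap between them apart. *)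
Lemma Hset_lipschitz (f : R -> R) (D T : R) :
  (forall z, Hset n c d z -> is_derive f z (Derive f z)) ->
  (forall z, Hset n c d z -> Rabs (Derive f z) <= D) ->
  (forall z, Hset n c d z -> Rabs (f z) <= T) ->
  exists L, forall x y, Hset n c d x -> Hset n c d y -> Rabs (f x - f y) <= L * Rabs (x - y).
Proof.
  intros Hd HD HT.
  assert (Hmon : forall x y L L', L <= L' -> Rabs (f x - f y) <= L * Rabs (x - y) ->
                   Rabs (f x - f y) <= L' * Rabs (x - y)).
  { intros x y L L' HL H. assert (0 <= Rabs (x - y)) by apply Rabs_pos. nra. }
  destruct (uniform_upper_bound n (fun i L => forall k, (k < n)%nat -> forall x y,
      c i < x < d i -> c k < y < d k -> Rabs (f x - f y) <= L * Rabs (x - y))) as [L HL].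
  - intros i L L' HLL HQ k Hk x y Hx Hy. exact (Hmon x y L L' HLL (HQ k Hk x y Hx Hy)).
  - intros i Hi. apply uniform_upper_bound.
    + intros k L L' HLL HQ x y Hx Hy. exact (Hmon x y L L' HLL (HQ x y Hx Hy)).
    + intros k Hk. destruct (Nat.eq_dec i k) as [<-|Hne].
      * exists D. apply interval_lipschitz_of_Derive.
        -- intros z Hz. apply Hd. exists i. auto.
        -- intros z Hz. apply HD. exists i. auto.
      * destruct (Hdisj i k Hi Hk Hne) as [Hg|Hg];
          [exists (2 * T / (c k - d i))|exists (2 * T / (c i - d k))];
          intros x y Hx Hy;
          (apply Rabs_sub_le_of_bounded; [apply HT; exists i; auto|apply HT; exists k; auto|]);
          split; try lra.
        -- rewrite Rabs_minus_sym, Rabs_right; lra.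
        -- rewrite Rabs_right; lra.
  - exists L. intros x y [i [Hi Hx]] [k [Hk Hy]]. exact (HL i Hi k Hk x y Hx Hy).
Qed.
End HsetLipschitz.

Lemma Cm_bar_twice_diff (m : nat) (A Abar : R -> Prop) (f : R -> R) :
  (2 <= m)%nat -> Cm_bar m A Abar f -> twice_diff_on A f.
Proof. intros Hm [Hd _] y Hy. split; [exact (Hd y Hy 1%nat ltac:(lia))|exact (Hd y Hy 2%nat Hm)]. Qed.

Lemma Cm_bar_cont (m : nat) (A Abar : R -> Prop) (f : R -> R) (x : R) :
  Cm_bar m A Abar f -> Abar x -> cont_within_ed Abar f x.
Proof. intros [_ [Hc _]] Hx. apply cont_within_ed_iff, Hc, Hx. Qed.

Section Setting.
Variables (n : nat) (c d : nat -> R) (p m : nat) (b theta : nat -> R -> R).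
Hypothesis Hcd : forall j, (j < n)%nat -> c j < d j.
Hypothesis Hdisj : forall i j, (i < n)%nat -> (j < n)%nat -> i <> j -> d i < c j \/ d j < c i.
Hypothesis Hm : (2 <= m)%nat.
Hypothesis Hb : forall j, (j < p)%nat -> Cm_bar m (Hset n c d) (Hbar n c d) (b j).
Hypothesis Htheta : forall j, (j < p)%nat -> Cm_bar m (Hset n c d) (Hbar n c d) (theta j).
Hypothesis Hbpos : forall j x, (j < p)%nat -> Hbar n c d x -> 0 < b j x.
Hypothesis HthetaH : forall j x, (j < p)%nat -> Hset n c d x -> Hset n c d (theta j x).

Lemma Cm_bar_Derive_n_bounded (f : R -> R) (k : nat) :
  Cm_bar m (Hset n c d) (Hbar n c d) f -> (k <= m)%nat ->
  exists M, forall z, Hset n c d z -> Rabs (Derive_n f k z) <= M.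
Proof.
  intros [_ [_ He]] Hk. destruct (He k Hk) as [g [Hge Hgc]].
  destruct (Hbar_bounded n c d Hcd g) as [M HM];
    [intros x Hx; apply cont_within_ed_iff, Hgc, Hx|].
  exists M. intros z Hz. rewrite <- Hge by exact Hz. apply HM, Hset_Hbar, Hz.
Qed.

Lemma b_ratio_le_supR (k j : nat) (z : R) : (k <= m)%nat -> (j < p)%nat -> Hset n c d z ->
  Rabs (Derive_n (b j) k z / b j z) <=
  supR (fun r => exists j x, (j < p)%nat /\ Hset n c d x /\ r = Rabs (Derive_n (b j) k x) / b j x).
Proof.
  intros Hk Hj Hz.
  destruct (uniform_upper_bound p (fun i K => forall x, Hset n c d x ->
              Rabs (Derive_n (b i) k x) / b i x <= K)) as [K HK].
  - intros i K K' HKK HQ x Hx. specialize (HQ x Hx). lra.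
  - intros i Hi.
    destruct (Cm_bar_Derive_n_bounded (b i) k (Hb i Hi) Hk) as [M HM].
    destruct (Hbar_pos_lower_bound n c d Hcd (b i)) as [mb [Hmb Hbm]].
    + intros x Hx. apply (Cm_bar_cont m (Hset n c d)); [apply Hb, Hi|exact Hx].
    + intros x Hx. apply Hbpos; assumption.
    + exists (M / mb). intros x Hx.
      assert (Hbx : mb <= b i x) by apply Hbm, Hset_Hbar, Hx.
      unfold Rdiv.
      apply Rmult_le_compat; [apply Rabs_pos| |apply HM, Hx|apply Rinv_le_contravar; assumption].
      left. apply Rinv_0_lt_compat. lra.
  - assert (Hbz := Hbpos j z Hj (Hset_Hbar n c d z Hz)).
    rewrite Rabs_div, (Rabs_right (b j z)) by lra.
    apply (supR_ub _ K); [intros r [i [x [Hi [Hx ->]]]]; apply HK; assumption|].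
    exists j, z. auto.
Qed.

Lemma b_ratio_supR_ge0 (k : nat) :
  0 <= supR (fun r => exists j x, (j < p)%nat /\ Hset n c d x /\ r = Rabs (Derive_n (b j) k x) / b j x).
Proof.
  apply supR_ge0. intros r [j [x [Hj [Hx ->]]]].
  apply Rdiv_le_0_compat; [apply Rabs_pos|apply Hbpos, Hset_Hbar; assumption].
Qed.

Lemma Cb1_ub (j : nat) (z : R) : (j < p)%nat -> Hset n c d z ->
  Rabs (Derive (b j) z / b j z) <= Cb1 p n c d b.
Proof. intros Hj Hz. exact (b_ratio_le_supR 1 j z ltac:(lia) Hj Hz). Qed.

Lemma Cb2_ub (j : nat) (z : R) : (j < p)%nat -> Hset n c d z ->
  Rabs (Derive_n (b j) 2 z / b j z) <= Cb2 p n c d b.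
Proof. intros Hj Hz. exact (b_ratio_le_supR 2 j z Hm Hj Hz). Qed.

Lemma Cb1_ge0 : 0 <= Cb1 p n c d b.
Proof. exact (b_ratio_supR_ge0 1). Qed.

Lemma Cb2_ge0 : 0 <= Cb2 p n c d b.
Proof. exact (b_ratio_supR_ge0 2). Qed.

Lemma Mth0_ge0 : 0 <= Mth0 p n c d theta.
Proof. apply supR_ge0. intros r [j [x [g [_ [_ [_ ->]]]]]]. apply Rabs_pos. Qed.

Lemma Mth0_ub (j : nat) (z : R) : (j < p)%nat -> Hset n c d z ->
  Rabs (Derive_n (theta j) 2 z) <= Mth0 p n c d theta.
Proof.
  intros Hj Hz.
  destruct (uniform_upper_bound p (fun i K => forall x, Hset n c d x ->
              Rabs (Derive_n (theta i) 2 x) <= K)) as [K HK].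
  - intros i K K' HKK HQ x Hx. specialize (HQ x Hx). lra.
  - intros i Hi. apply Cm_bar_Derive_n_bounded; [apply Htheta, Hi|exact Hm].
  - destruct (Htheta j Hj) as [_ [_ He]]. destruct (He 2%nat Hm) as [g0 Hg0].
    rewrite <- (proj1 Hg0 z Hz). apply (supR_ub _ K).
    + intros r [i [x [g [Hi [Hx [[Hge Hgc] ->]]]]]].
      apply (Hbar_le_of_Hset n c d Hcd (fun u => Rabs (g u))); [|exact Hx|].
      * apply cont_within_ed_comp_cont; [apply Rcontinuity_abs|apply cont_within_ed_iff, Hgc, Hx].
      * intros u Hu. rewrite Hge by exact Hu. apply HK; assumption.
    + exists j, z, g0. split; [exact Hj|]. split; [apply Hset_Hbar, Hz|]. split; [exact Hg0|reflexivity].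
Qed.

Lemma theta_twice_diff (j : nat) : (j < p)%nat -> twice_diff_on (Hset n c d) (theta j).
Proof. intros Hj. apply (Cm_bar_twice_diff m _ (Hbar n c d)); [exact Hm|apply Htheta, Hj]. Qed.

Lemma b_twice_diff (j : nat) : (j < p)%nat -> twice_diff_on (Hset n c d) (b j).
Proof. intros Hj. apply (Cm_bar_twice_diff m _ (Hbar n c d)); [exact Hm|apply Hb, Hj]. Qed.

Lemma letters_lipschitz : exists L, 0 <= L /\
  forall j x y, (j < p)%nat -> Hset n c d x -> Hset n c d y ->
  Rabs (theta j x - theta j y) <= L * Rabs (x - y).
Proof.
  destruct (uniform_upper_bound p (fun j L => forall x y, Hset n c d x -> Hset n c d y ->
              Rabs (theta j x - theta j y) <= L * Rabs (x - y))) as [L HL].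
  - intros j L L' HLL HQ x y Hx Hy. specialize (HQ x y Hx Hy).
    assert (0 <= Rabs (x - y)) by apply Rabs_pos. nra.
  - intros j Hj.
    destruct (Cm_bar_Derive_n_bounded (theta j) 1 (Htheta j Hj) ltac:(lia)) as [D HD].
    destruct (Cm_bar_Derive_n_bounded (theta j) 0 (Htheta j Hj) ltac:(lia)) as [T HT].
    apply (Hset_lipschitz n c d Hdisj (theta j) D T); [|exact HD|exact HT].
    intros z Hz. apply (twice_diff_is_derive (Hset n c d)); [apply theta_twice_diff, Hj|exact Hz].
  - exists (Rmax L 0). split; [apply Rmax_r|]. intros j x y Hj Hx Hy.
    eapply Rle_trans; [apply HL; assumption|].
    apply Rmult_le_compat_r; [apply Rabs_pos|apply Rmax_l].
Qed.

Lemma word_lipschitz (L : R) : 0 <= L ->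
  (forall j x y, (j < p)%nat -> Hset n c d x -> Hset n c d y ->
     Rabs (theta j x - theta j y) <= L * Rabs (x - y)) ->
  forall w x y, word_over p w -> Hset n c d x -> Hset n c d y ->
  Rabs (theta_w theta w x - theta_w theta w y) <= L ^ length w * Rabs (x - y).
Proof.
  intros HL0 HL w x y Hw. revert x y.
  induction Hw as [|j w' Hj Hw' IH]; intros x y Hx Hy; cbn [theta_w length pow]; [lra|].
  eapply Rle_trans; [apply IH; apply HthetaH; assumption|].
  assert (0 <= L ^ length w') by (apply pow_le, HL0).
  rewrite (Rmult_comm L), Rmult_assoc. apply Rmult_le_compat_l; [assumption|apply HL; assumption].
Qed.

Lemma eps_ge0 (k : nat) : 0 <= eps p n c d theta k.
Proof.
  destruct k as [|k]; cbn [eps]; [lra|]. apply supR_ge0.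
  intros r [w [x [y [_ [_ [_ [Hxy ->]]]]]]].
  apply Rdiv_le_0_compat; [apply Rabs_pos|apply Rabs_pos_lt; lra].
Qed.

Lemma eps_lipschitz (w : list nat) (x y : R) : word_over p w -> Hset n c d x -> Hset n c d y ->
  Rabs (theta_w theta w x - theta_w theta w y) <= eps p n c d theta (length w) * Rabs (x - y).
Proof.
  intros Hw Hx Hy. destruct w as [|j w']; [cbn; lra|].
  destruct (Req_dec x y) as [<-|Hxy]; [rewrite !Rminus_diag, Rabs_R0, Rmult_0_r; lra|].
  destruct letters_lipschitz as [L [HL0 HL]].
  assert (Hpos : 0 < Rabs (x - y)) by (apply Rabs_pos_lt; lra).
  apply Rmult_le_reg_r with (/ Rabs (x - y)); [apply Rinv_0_lt_compat, Hpos|].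
  rewrite Rmult_assoc, Rinv_r, Rmult_1_r by lra.
  apply (supR_ub _ (L ^ length (j :: w'))).
  - intros r [w2 [x2 [y2 [[Hl Hw2] [Hx2 [Hy2 [Hxy2 ->]]]]]]].
    assert (Hp2 : 0 < Rabs (x2 - y2)) by (apply Rabs_pos_lt; lra).
    apply Rmult_le_reg_r with (Rabs (x2 - y2)); [exact Hp2|].
    unfold Rdiv. rewrite Rmult_assoc, Rinv_l, Rmult_1_r by lra.
    rewrite <- Hl. apply word_lipschitz; assumption.
  - exists (j :: w'), x, y. repeat split; auto.
Qed.

Lemma dtheta_w_le_eps (w : list nat) (y : R) : word_over p w -> Hset n c d y ->
  Rabs (dtheta_w theta w y) <= eps p n c d theta (length w).
Proof.
  intros Hw Hy. apply (Rabs_derive_le_of_lipschitz (theta_w theta w) y).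
  - apply (is_derive_theta_w (Hset n c d) p); [exact theta_twice_diff|exact HthetaH|exact Hw|exact Hy].
  - destruct (Hset_open n c d y Hy) as [del [Hdel HP]]. exists del. split; [exact Hdel|].
    intros z Hz. apply eps_lipschitz; [exact Hw|apply HP, Hz|exact Hy].
Qed.

(* A word of length [k + mu] is a word of length [k] followed by a contracting word of length [mu]. *)
Lemma eps_contraction (mu : nat) (kappa : R) : (1 <= mu)%nat ->
  (forall w x y, word p mu w -> Hbar n c d x -> Hbar n c d y ->
     Rabs (theta_w theta w x - theta_w theta w y) <= kappa * Rabs (x - y)) ->
  forall k, eps p n c d theta (k + mu) <= Rmax kappa 0 * eps p n c d theta k.
Proof.
  intros Hmu Hc k.
  assert (HK0 : 0 <= Rmax kappa 0 * eps p n c d theta k)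
    by (apply Rmult_le_pos; [apply Rmax_r|apply eps_ge0]).
  destruct (k + mu)%nat as [|q] eqn:Hkq; [lia|].
  unfold eps at 1. apply supR_le; [|exact HK0].
  intros r [w [x [y [[Hl Hw] [Hx [Hy [Hxy ->]]]]]]].
  assert (Hpos : 0 < Rabs (x - y)) by (apply Rabs_pos_lt; lra).
  apply Rmult_le_reg_r with (Rabs (x - y)); [exact Hpos|].
  unfold Rdiv. rewrite Rmult_assoc, Rinv_l, Rmult_1_r by lra.
  rewrite <- (firstn_skipn k w) in Hw |- *. apply List.Forall_app in Hw as [Hu Hv].
  rewrite !theta_w_app.
  assert (Hlu : length (firstn k w) = k) by (apply firstn_length_le; lia).
  assert (Hlv : length (skipn k w) = mu) by (rewrite length_skipn; lia).
  eapply Rle_trans.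
  { apply Hc; [split; assumption| |];
      apply Hset_Hbar, (theta_w_in _ p); assumption. }
  eapply Rle_trans; [apply Rmult_le_compat_r; [apply Rabs_pos|apply (Rmax_l kappa 0)]|].
  rewrite Rmult_assoc. apply Rmult_le_compat_l; [apply Rmax_r|].
  replace (eps p n c d theta k) with (eps p n c d theta (length (firstn k w)))
    by (rewrite Hlu; reflexivity).
  apply eps_lipschitz; assumption.
Qed.

Lemma eps_series_bounds :
  (exists (mu : nat) (kappa : R), (1 <= mu)%nat /\ kappa < 1 /\
     forall w x y, word p mu w -> Hbar n c d x -> Hbar n c d y ->
       Rabs (theta_w theta w x - theta_w theta w y) <= kappa * Rabs (x - y)) ->
  (forall N, psum (eps p n c d theta) N <= Series (eps p n c d theta)) /\
  (forall N, psum (fun k => eps p n c d theta k ^ 2) N <= Series (fun k => eps p n c d theta k ^ 2)).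
Proof.
  intros [mu [kappa [Hmu [Hk Hc]]]].
  assert (Hq : 0 <= Rmax kappa 0 < 1) by (split; [apply Rmax_r|unfold Rmax; destruct Rle_dec; lra]).
  assert (Hrec := eps_contraction mu kappa Hmu Hc).
  split.
  - apply (psum_le_Series _ mu (Rmax kappa 0)); [exact eps_ge0|exact Hmu|exact Hq|exact Hrec].
  - apply (psum_le_Series _ mu (Rmax kappa 0 ^ 2)); [intros; apply pow2_ge_0|exact Hmu| |].
    + split; [apply pow2_ge_0|]. nra.
    + intros k. rewrite <- Rpow_mult_distr. apply pow_incr. split; [apply eps_ge0|apply Hrec].
Qed.

Lemma Derive2_Rpower_b_w_bounds (S1 S2 s : R) (w : list nat) (y : R) :
  (forall N, psum (eps p n c d theta) N <= S1) ->
  (forall N, psum (fun k => eps p n c d theta k ^ 2) N <= S2) ->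
  0 < s -> word_over p w -> Hset n c d y ->
  let K1 := Cb1 p n c d b in
  let K2 := Cb2 p n c d b in
  let M := Mth0 p n c d theta in
  - (s * S2 * (K1 ^ 2 + K2 + K1 * M * S1)) * Rpower (b_w b theta w y) s
  <= Derive_n (fun t => Rpower (b_w b theta w t) s) 2 y <=
  (s ^ 2 * K1 ^ 2 * S1 ^ 2 + s * S2 * (K2 + K1 * M * S1)) * Rpower (b_w b theta w y) s.
Proof.
  intros HS1 HS2 Hs Hw Hy K1 K2 M.
  assert (HbH : forall j z, (j < p)%nat -> Hset n c d z -> 0 < b j z)
    by (intros; apply Hbpos, Hset_Hbar; assumption).
  rewrite (Derive2_Rpower_b_w (Hset n c d) p b theta (Hset_locally n c d)
             theta_twice_diff b_twice_diff HthetaH HbH w s y Hw Hy).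
  destruct (log_derivatives_le (Hset n c d) p b theta (eps p n c d theta) K1 K2 M
              eps_ge0 Cb1_ge0 Cb2_ge0 Mth0_ge0 HthetaH dtheta_w_le_eps Cb1_ub Cb2_ub Mth0_ub
              S1 S2 HS1 HS2 w y Hw Hy) as [Ha Hq].
  destruct (second_log_derivative_bounds s _ _ _ _ _ Hs Ha Hq) as [Hlo Hup].
  assert (HF : 0 < Rpower (b_w b theta w y) s) by apply exp_pos.
  rewrite (Rmult_comm (Rpower _ s)).
  split; apply Rmult_le_compat_r; lra.
Qed.

Lemma theta_Hbar (j : nat) (x : R) : (j < p)%nat -> Hbar n c d x -> Hbar n c d (theta j x).
Proof.
  intros Hj. apply (Hbar_stable n c d Hcd (theta j)).
  - intros z Hz. apply (Cm_bar_cont m (Hset n c d)); [apply Htheta, Hj|exact Hz].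
  - intros z Hz. apply HthetaH; assumption.
Qed.

Lemma b_w_Hbar (w : list nat) (x : R) : word_over p w -> Hbar n c d x ->
  0 < b_w b theta w x /\ cont_within_ed (Hbar n c d) (b_w b theta w) x.
Proof.
  intros Hw. revert x. induction Hw as [|j w' Hj Hw' IH]; intros x Hx; cbn [b_w].
  - split; [lra|apply cont_within_ed_const].
  - destruct (IH (theta j x) (theta_Hbar j x Hj Hx)) as [Hpos Hcont].
    assert (Hbj : forall z, Hbar n c d z -> cont_within_ed (Hbar n c d) (b j) z)
      by (intros z Hz; apply (Cm_bar_cont m (Hset n c d)); [apply Hb, Hj|exact Hz]).
    split; [apply Rmult_lt_0_compat; [exact Hpos|apply Hbpos; assumption]|].
    apply cont_within_ed_mult; [|apply Hbj, Hx].
    apply cont_within_ed_comp; [intros z Hz; apply theta_Hbar; assumption| |exact Hcont].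
    apply (Cm_bar_cont m (Hset n c d)); [apply Htheta, Hj|exact Hx].
Qed.

Lemma Rpower_b_w_cont (w : list nat) (s x : R) : word_over p w -> Hbar n c d x ->
  cont_within_ed (Hbar n c d) (fun z => Rpower (b_w b theta w z) s) x.
Proof.
  intros Hw Hx. destruct (b_w_Hbar w x Hw Hx) as [Hpos Hc].
  apply (cont_within_ed_comp_cont _ (fun u => Rpower u s)); [|exact Hc].
  apply continuity_pt_filterlim.
  apply (ex_derive_continuous (K := R_AbsRing) (V := R_NormedModule) (fun u => Rpower u s)).
  eexists. apply is_derive_Rpower_l, Hpos.
Qed.
End Setting.

Theorem lemma6p3 (n : nat) (c d : nat -> R) (p m : nat)
  (b theta : nat -> R -> R)
  (Hcd : forall j, (j < n)%nat -> c j < d j)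
  (Hdisj : forall i j, (i < n)%nat -> (j < n)%nat -> i <> j -> d i < c j \/ d j < c i)
  (Hm : (2 <= m)%nat)
  (Hb : forall j, (j < p)%nat -> Cm_bar m (Hset n c d) (Hbar n c d) (b j))
  (Htheta : forall j, (j < p)%nat -> Cm_bar m (Hset n c d) (Hbar n c d) (theta j))
  (Hbpos : forall j x, (j < p)%nat -> Hbar n c d x -> 0 < b j x)
  (HthetaH : forall j x, (j < p)%nat -> Hset n c d x -> Hset n c d (theta j x))
  (Hcontr : exists (mu : nat) (kappa : R), (1 <= mu)%nat /\ kappa < 1 /\
     forall w x y, word p mu w -> Hbar n c d x -> Hbar n c d y ->
       Rabs (theta_w theta w x - theta_w theta w y) <= kappa * Rabs (x - y)) :
  let K1 := Cb1 p n c d b in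
  let K2 := Cb2 p n c d b in
  let M := Mth0 p n c d theta in
  let S1 := Series (eps p n c d theta) in
  let S2 := Series (fun k => (eps p n c d theta k) ^ 2) in
  forall (s : R), 0 < s ->
  forall (nu : nat) (w : list nat), (1 <= nu)%nat -> word p nu w ->
  forall (g : R -> R),
    cont_ext (Hset n c d) (Hbar n c d)
      (Derive_n (fun y => Rpower (b_w b theta w y) s) 2) g ->
  forall x, Hbar n c d x ->
    g x / Rpower (b_w b theta w x) s
      <= s ^ 2 * K1 ^ 2 * S1 ^ 2 + s * S2 * (K2 + K1 * M * S1) /\
    g x / Rpower (b_w b theta w x) s
      >= - (s * S2 * (K1 ^ 2 + K2 + K1 * M * S1)).
Proof.
  intros K1 K2 M S1 S2 s Hs nu w _ [_ Hw] g [Hge Hgc] x Hx.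
  destruct (eps_series_bounds n c d p m theta Hcd Hdisj Hm Htheta HthetaH Hcontr) as [HS1 HS2].
  assert (Hratio : - (s * S2 * (K1 ^ 2 + K2 + K1 * M * S1)) <= g x / Rpower (b_w b theta w x) s
                   <= s ^ 2 * K1 ^ 2 * S1 ^ 2 + s * S2 * (K2 + K1 * M * S1)).
  { apply (Hbar_ratio_bounds n c d Hcd g (fun z => Rpower (b_w b theta w z) s)).
    - apply cont_within_ed_iff, Hgc, Hx.
    - exact (Rpower_b_w_cont n c d p m b theta Hcd Hb Htheta Hbpos HthetaH w s x Hw Hx).
    - exact Hx.
    - apply exp_pos.
    - intros z Hz. rewrite Hge by exact Hz.
      exact (Derive2_Rpower_b_w_bounds n c d p m b theta Hcd Hdisj Hm Hb Htheta Hbpos HthetaH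
               S1 S2 s w z HS1 HS2 Hs Hw Hz). }
  split; [|apply Rle_ge]; apply Hratio.
Qed.
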